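(* Let $F_X,F_Y$ be univariate distributions. The set $\mathfrak{Q}^{F_X,F_Y}$ of all bivariate quasi-distributions with margins $F_X,F_Y$ and the set $\mathfrak{D}^{F_X,F_Y}$ of all bivariate distributions with margins $F_X,F_Y$ are compact in the uniform norm (supremum norm on functions on $\overline{\mathbb{R}}^2$).
   Context: $\overline{\mathbb{R}}=\mathbb{R}\cup\{-\infty,\infty\}$. A univariate distribution is a nondecreasing function $G:\overline{\mathbb{R}}\to[0,1]$ with $G(-\infty)=0$, $G(\infty)=1$ (not necessarily right continuous). The volume of a rectangle $[x_1,x_2]\times[y_1,y_2]$ with respect to $F$ is $F(x_1,y_1)+F(x_2,y_2)-F(x_2,y_1)-F(x_1,y_2)$. A bivariate quasi-distribution is $F:\overline{\mathbb{R}}^2\to[0,1]$ with $F(x,-\infty)=F(-\infty,y)=0$, $F(\infty,\infty)=1$, and nonnegative volume for every rectangle with corners in $\overline{\mathbb{R}}^2$ intersecting the boundary (points with a coordinate $\pm\infty$); a bivariate distribution additionally has nonnegative volume for every rectangle. Its margins are $F(\cdot,\infty)$ and $F(\infty,\cdot)$. *)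

From HB Require Import structures.
From mathcomp Require Import all_boot all_order all_algebra.
From mathcomp Require Import all_classical all_reals all_analysis.
Set Implicit Arguments. Unset Strict Implicit. Unset Printing Implicit Defensive.
Import Order.TTheory GRing.Theory Num.Theory.
Import numFieldNormedType.Exports.
Local Open Scope classical_set_scope.
Local Open Scope ring_scope.

(* Univariate distribution: nondecreasing G : \bar R -> [0,1],
   G(-oo) = 0, G(+oo) = 1 (not necessarily right continuous). *)
Definition univ_dist (R : realType) (G : \bar R -> R) : Prop :=
  [/\ (forall x, 0 <= G x <= 1),
      (forall x y : \bar R, (x <= y)%E -> G x <= G y),
      G -oo%E = 0 & G +oo%E = 1].

Definition volume2 (R : realType) (F : \bar R * \bar R -> R)
  (x1 x2 y1 y2 : \bar R) : R :=
  F (x1, y1) + F (x2, y2) - F (x2, y1) - F (x1, y2).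

Definition meets_boundary (R : realType) (x1 x2 y1 y2 : \bar R) : Prop :=
  ~ [/\ x1 \is a fin_num, x2 \is a fin_num, y1 \is a fin_num & y2 \is a fin_num].

Definition quasi_dist (R : realType) (F : \bar R * \bar R -> R) : Prop :=
  [/\ (forall p, 0 <= F p <= 1),
      (forall x, F (x, -oo%E) = 0),
      (forall y, F (-oo%E, y) = 0),
      F (+oo%E, +oo%E) = 1 &
      (forall x1 x2 y1 y2 : \bar R, (x1 <= x2)%E -> (y1 <= y2)%E ->
         meets_boundary x1 x2 y1 y2 -> 0 <= volume2 F x1 x2 y1 y2)].

Definition biv_dist (R : realType) (F : \bar R * \bar R -> R) : Prop :=
  quasi_dist F /\
  (forall x1 x2 y1 y2 : \bar R, (x1 <= x2)%E -> (y1 <= y2)%E ->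
     0 <= volume2 F x1 x2 y1 y2).

Definition has_margins (R : realType) (F : \bar R * \bar R -> R)
  (FX FY : \bar R -> R) : Prop :=
  (forall x, F (x, +oo%E) = FX x) /\ (forall y, F (+oo%E, y) = FY y).

Definition QSet (R : realType) (FX FY : \bar R -> R) :
  set {uniform (\bar R * \bar R) -> R} :=
  [set F | quasi_dist F /\ has_margins F FX FY].

Definition DSet (R : realType) (FX FY : \bar R -> R) :
  set {uniform (\bar R * \bar R) -> R} :=
  [set F | biv_dist F /\ has_margins F FX FY].

From HB Require Import structures.
From mathcomp Require Import all_boot all_order all_algebra.
From mathcomp Require Import all_classical all_reals all_analysis.
From mathcomp Require Import lra.
Import Order.TTheory GRing.Theory Num.Theory.
Import numFieldNormedType.Exports.
Local Open Scope classical_set_scope.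
Local Open Scope ring_scope.

(* Every F in Q^{FX,FY} is 1-Lipschitz for the pseudometric
   |FX x - FX x'| + |FY y - FY y'| on \bar R^2: the nonnegative volumes of the
   rectangles [x1,x2] x [-oo,y] and [x1,x2] x [y,+oo] squeeze the increment of
   F in x between 0 and the increment of FX, and symmetrically in y.  Since the
   margins are [0,1]-valued, this pseudometric is totally bounded.  A set of
   [0,1]-valued functions that is equi-Lipschitz for a totally bounded
   pseudometric and closed under pointwise limits is compact in the uniform
   topology: along an ultrafilter the pointwise limit exists by compactness of
   [0,1], and finite nets upgrade it to a uniform limit.  Finally Q and D are
   closed under pointwise limits, as each of their defining conditions involves
   finitely many values of F. *)

Lemma ultra_cvg_compact (T : Type) (V : topologicalType) (U : set_system T)
    (h : T -> V) (K : set V) :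
  UltraFilter U -> compact K -> U (h @^-1` K) -> exists c : V, h @ U --> c.
Proof.
move=> UU cK UK; have [c [_ clc]] := cK (h @ U) _ UK.
exists c => B Bc; have [//|UnB] := in_ultra_setVsetC (h @^-1` B) UU.
by have [z []] := clc (~` B) B UnB Bc.
Qed.

Section UniformCompactness.
Context {R : realType}.

Lemma uniform_cvgr_dist_lt (T : choiceType) (U : set_system {uniform T -> R})
    {FU : Filter U} (g : T -> R) :
  (forall e, 0 < e -> \forall f \near U, forall t, `|g t - f t| < e) ->
  U --> (g : {uniform T -> R}).
Proof.
move=> Ug P /uniform_nbhs [E [entE subP]]; apply: (filterS subP).
move: entE; rewrite -entourage_from_ballE => -[e /= e0 subE].
by apply: filterS (Ug e e0) => f fe t _; apply: subE; exact: fe.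
Qed.

Definition totally_bounded {T : Type} (d : T -> T -> R) : Prop :=
  forall e, 0 < e -> exists (I : finType) (r : I -> T), forall t, exists i, d t (r i) < e.

Lemma totally_bounded_sum {T1 T2 : Type} {d1 : T1 -> T1 -> R} {d2 : T2 -> T2 -> R} :
  totally_bounded d1 -> totally_bounded d2 ->
  totally_bounded (fun p q : T1 * T2 => d1 p.1 q.1 + d2 p.2 q.2).
Proof.
move=> tb1 tb2 e e0; have e20 : 0 < e / 2 by rewrite divr_gt0.
have [I1 [r1 net1]] := tb1 _ e20; have [I2 [r2 net2]] := tb2 _ e20.
exists (I1 * I2)%type, (fun i => (r1 i.1, r2 i.2)) => -[t1 t2].
have [i1 d1i] := net1 t1; have [i2 d2i] := net2 t2.
by exists (i1, i2) => /=; rewrite [e]splitr ltrD.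
Qed.

Lemma totally_bounded_unit_valued {T : pointedType} {G : T -> R} :
  (forall t, 0 <= G t <= 1) -> totally_bounded (fun s t => `|G s - G t|).
Proof.
move=> G01 e e0; pose N := (Num.truncn (2 / e)).+1.
have N0 : 0 < N%:R :> R by rewrite ltr0n.
have eN : 2 / N%:R < e by rewrite ltr_pdivrMr // mulrC -ltr_pdivrMr // truncnS_gt.
pose near_grid (k : nat) : set T := [set t | `|G t - k%:R / N%:R| <= N%:R^-1].
exists 'I_N.+1, (fun k : 'I_N.+1 => xget point (near_grid k)) => t.
have [Gt0 Gt1] := andP (G01 t).
have [tl tu] := andP (truncn_itv (mulr_ge0 Gt0 (ltW N0))).
have kN : (Num.truncn (G t * N%:R) < N.+1)%N.
  rewrite ltnS truncn_le_nat.
  by rewrite (le_lt_trans (ler_wpM2r (ltW N0) Gt1)) // mul1r ltr_nat.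
exists (Ordinal kN) => /=; set k := Num.truncn _ in kN tl tu *.
have grid_t : near_grid k t.
  rewrite /near_grid /= ger0_norm ?subr_ge0 ?ler_pdivrMr //.
  rewrite lerBlDr -{1}[N%:R^-1]mul1r -mulrDl ler_pdivlMr // addrC natr1; exact: ltW.
have := xgetPex point (ex_intro _ t grid_t); set r := xget _ _ => grid_r.
apply: le_lt_trans eN; rewrite (le_trans (ler_distD (k%:R / N%:R) _ _)) //.
by rewrite distrC in grid_r; move: grid_t grid_r; rewrite /near_grid /=; lra.
Qed.

Section EquiLipschitzCompact.
Context {T : choiceType} {d : T -> T -> R} {K : set R} {S : set {uniform T -> R}}.
Hypotheses (d_tb : totally_bounded d) (K_compact : compact K).
Hypothesis S_K : forall f t, S f -> K (f t).
Hypothesis S_lip : forall f p q, S f -> `|f p - f q| <= d p q.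
Hypothesis S_pointwise_closed : forall (U : set_system (T -> R)) (g : T -> R),
  ProperFilter U -> U S -> (forall t, (fun f => f t) @ U --> g t) -> S g.

Lemma equiLipschitz_compact : compact S.
Proof.
rewrite compact_ultra => U UU US.
have ev_cvg t : exists c : R, (fun f : {uniform T -> R} => f t) @ U --> c.
  apply: (@ultra_cvg_compact _ R _ (fun f : {uniform T -> R} => f t) K UU K_compact).
  by apply: filterS US => f Sf; exact: S_K.
pose g t := xget 0 [set c : R | (fun f : {uniform T -> R} => f t) @ U --> c].
have g_cvg t : (fun f : {uniform T -> R} => f t) @ U --> g t.
  by have := xgetPex 0 (ev_cvg t).
have Sg : S g by exact: S_pointwise_closed US g_cvg.
exists g; split => //; apply: uniform_cvgr_dist_lt => e e0.
have e30 : 0 < e / 3 by rewrite divr_gt0.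
have [I [r net]] := d_tb _ e30.
have : \forall f \near U, S f /\ forall i, `|g (r i) - f (r i)| < e / 3.
  apply: filterI => //; apply: filter_forall => i.
  by move/cvgrPdist_lt : (g_cvg (r i)); apply.
apply: filterS => f [Sf fr] t; have [i dti] := net t.
have := S_lip g t (r i) Sg; have := S_lip f t (r i) Sf; have := fr i.
have := ler_distD (g (r i)) (g t) (f t); have := ler_distD (f (r i)) (g (r i)) (f t).
rewrite [`|f (r i) - f t|]distrC; lra.
Qed.

End EquiLipschitzCompact.

End UniformCompactness.

Lemma ler_dist_of_incr {R : realDomainType} {disp : Order.disp_t} {T : orderType disp}
    (f h : T -> R) :
  (forall a b, (a <= b)%O -> 0 <= f b - f a <= h b - h a) ->
  forall a b, `|f a - f b| <= `|h a - h b|.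
Proof.
move=> incr a b; wlog ab : a b / (a <= b)%O => [hwlog|].
  by have [/hwlog//|/ltW/hwlog] := leP a b; rewrite distrC [`|h _ - _|]distrC.
have /andP[fab hab] := incr a b ab.
by rewrite distrC ger0_norm // (le_trans hab) // distrC ler_norm.
Qed.

Section QuasiDistributions.
Variables (R : realType) (F : \bar R * \bar R -> R) (FX FY : \bar R -> R).
Hypotheses (FQ : quasi_dist F) (FM : has_margins F FX FY).

Lemma quasi_dist_incr_x y x1 x2 :
  (x1 <= x2)%E -> 0 <= F (x2, y) - F (x1, y) <= FX x2 - FX x1.
Proof.
have [_ F_0 _ _ F_vol] := FQ; have [F_FX _] := FM; move=> x12.
have := F_vol x1 x2 -oo%E y x12 (leNye y) ltac:(by case).
have := F_vol x1 x2 y +oo%E x12 (leey y) ltac:(by case).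
by rewrite /volume2 !F_0 !F_FX => ? ?; apply/andP; split; lra.
Qed.

Lemma quasi_dist_incr_y x y1 y2 :
  (y1 <= y2)%E -> 0 <= F (x, y2) - F (x, y1) <= FY y2 - FY y1.
Proof.
have [_ _ F0_ _ F_vol] := FQ; have [_ F_FY] := FM; move=> y12.
have := F_vol -oo%E x y1 y2 (leNye x) y12 ltac:(by case).
have := F_vol x +oo%E y1 y2 (leey x) y12 ltac:(by case).
by rewrite /volume2 !F0_ !F_FY => ? ?; apply/andP; split; lra.
Qed.

Lemma quasi_dist_lipschitz p q :
  `|F p - F q| <= `|FX p.1 - FX q.1| + `|FY p.2 - FY q.2|.
Proof.
case: p q => [x1 y1] [x2 y2] /=.
have dx := ler_dist_of_incr (fun x => F (x, y1)) FX (quasi_dist_incr_x y1) x1 x2.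
have dy := ler_dist_of_incr (fun y => F (x2, y)) FY (quasi_dist_incr_y x2) y1 y2.
by rewrite (le_trans (ler_distD (F (x2, y1)) _ _)) // lerD.
Qed.

End QuasiDistributions.

Section PointwiseLimit.
Context {R : realType} {U : set_system (\bar R * \bar R -> R)} {PU : ProperFilter U}.
Context {g : \bar R * \bar R -> R}.
Hypothesis g_cvg : forall p, (fun f => f p) @ U --> g p.

Lemma pointwise_lim_closed (A : R -> Prop) p :
  closed A -> (\forall f \near U, A (f p)) -> A (g p).
Proof. by move=> cA UA; exact: closed_cvg cA UA _ (g_cvg p). Qed.

Lemma volume2_pointwise_cvg x1 x2 y1 y2 :
  (fun f => volume2 f x1 x2 y1 y2) @ U --> volume2 g x1 x2 y1 y2.
Proof. by apply: cvgB; [apply: cvgB; [apply: cvgD|]|]; exact: g_cvg. Qed.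

Lemma quasi_dist_pointwise_lim : (\forall f \near U, quasi_dist f) -> quasi_dist g.
Proof.
move=> UQ; split.
- move=> p; have := @pointwise_lim_closed [set` `[0, 1]] p.
  rewrite /= in_itv; apply; first exact: interval_closed.
  by apply: filterS UQ => f [f01 _ _ _ _]; rewrite in_itv; exact: f01.
- move=> x; apply: (@pointwise_lim_closed _ (x, -oo%E) (closed_eq (y := 0))).
  by apply: filterS UQ => f [_ f_0 _ _ _].
- move=> y; apply: (@pointwise_lim_closed _ (-oo%E, y) (closed_eq (y := 0))).
  by apply: filterS UQ => f [_ _ f0_ _ _].
- apply: (@pointwise_lim_closed _ (+oo%E, +oo%E) (closed_eq (y := 1))).
  by apply: filterS UQ => f [_ _ _ f1 _].
- move=> x1 x2 y1 y2 x12 y12 xy.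
  apply: closed_cvg (closed_ge (y := 0)) _ _ (volume2_pointwise_cvg x1 x2 y1 y2).
  by apply: filterS UQ => f [_ _ _ _ f_vol]; exact: f_vol x12 y12 xy.
Qed.

Lemma biv_dist_pointwise_lim : (\forall f \near U, biv_dist f) -> biv_dist g.
Proof.
move=> UD; split.
  by apply: quasi_dist_pointwise_lim; apply: filterS UD => f [].
move=> x1 x2 y1 y2 x12 y12.
apply: closed_cvg (closed_ge (y := 0)) _ _ (volume2_pointwise_cvg x1 x2 y1 y2).
by apply: filterS UD => f [_ f_vol]; exact: f_vol x12 y12.
Qed.

Lemma has_margins_pointwise_lim FX FY :
  (\forall f \near U, has_margins f FX FY) -> has_margins g FX FY.
Proof.
move=> UM; split.
- move=> x; apply: (@pointwise_lim_closed _ (x, +oo%E) (closed_eq (y := FX x))).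
  by apply: filterS UM => f [f_FX _].
- move=> y; apply: (@pointwise_lim_closed _ (+oo%E, y) (closed_eq (y := FY y))).
  by apply: filterS UM => f [_ f_FY].
Qed.

End PointwiseLimit.

Lemma compact_with_margins (R : realType) (FX FY : \bar R -> R)
    (P : set (\bar R * \bar R -> R)) :
  (forall x, 0 <= FX x <= 1) -> (forall y, 0 <= FY y <= 1) ->
  (forall F, P F -> quasi_dist F) ->
  (forall U g, ProperFilter U -> (\forall f \near U, P f) ->
     (forall p, (fun f => f p) @ U --> g p) -> P g) ->
  compact ([set F | P F /\ has_margins F FX FY] : set {uniform \bar R * \bar R -> R}).
Proof.
move=> FX01 FY01 PQ P_lim.
have tb := totally_bounded_sum (totally_bounded_unit_valued FX01)
                               (totally_bounded_unit_valued FY01).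
apply: (equiLipschitz_compact tb (@segment_compact R 0 1)).
- by move=> F p [/PQ [F01 _ _ _ _] _]; rewrite /= in_itv F01.
- by move=> F p q [/PQ FQ FM]; exact: quasi_dist_lipschitz.
- move=> U g PU UPM g_cvg; split.
    by apply: P_lim g_cvg; apply: filterS UPM => f [].
  by apply: (has_margins_pointwise_lim g_cvg); apply: filterS UPM => f [].
Qed.

Theorem corollary5 (R : realType) (FX FY : \bar R -> R) :
  univ_dist FX -> univ_dist FY ->
  compact (QSet FX FY) /\ compact (DSet FX FY).
Proof.
move=> [FX01 _ _ _] [FY01 _ _ _]; split.
- apply: (@compact_with_margins R FX FY (@quasi_dist R)) => // U g PU UQ g_cvg.
  exact: (quasi_dist_pointwise_lim g_cvg).
- apply: (@compact_with_margins R FX FY (@biv_dist R)) => //; first by move=> F [].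
  by move=> U g PU UD g_cvg; exact: (biv_dist_pointwise_lim g_cvg).
Qed.
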